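(* Let $G$ be a multiplicative monoid with identity, let $N$ be a $G$-graded near-ring, and let $P$ be a graded weakly prime ideal of $N$. If $I$ and $J$ are graded ideals of $N$ with $IJ=\{0\}$, $I\not\subseteq P$ and $J\not\subseteq P$, then $IP = PJ$.
   Context: A near-ring $(N,+,\cdot)$ is a set with two binary operations such that $(N,+)$ is a group (not necessarily abelian), $(N,\cdot)$ is a semigroup, and $(a+b)y = ay+by$ for all $a,b,y\in N$. For a multiplicative monoid $G$ with identity, $N$ is a $G$-graded near-ring if there is a family $\{N_\sigma\}_{\sigma\in G}$ of additive normal subgroups of $N$ with $N=\bigoplus_{\sigma\in G}N_\sigma$ and $N_\sigma N_\tau\subseteq N_{\sigma\tau}$. An ideal $P$ of $N$ is graded if $P=\bigoplus_{\sigma}(P\cap N_\sigma)$. For ideals $I,J$, $IJ$ denotes their product. A graded ideal $P$ is graded weakly prime if for all graded ideals $I,J$ of $N$ with $\{0\}\neq IJ\subseteq P$, either $I\subseteq P$ or $J\subseteq P$. *)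

From Stdlib Require Import List.
Import ListNotations.

Record monoid := Monoid {
  mon_car :> Type;
  mon_mul : mon_car -> mon_car -> mon_car;
  mon_one : mon_car;
  mon_mulA : forall a b c, mon_mul a (mon_mul b c) = mon_mul (mon_mul a b) c;
  mon_mul1l : forall a, mon_mul mon_one a = a;
  mon_mul1r : forall a, mon_mul a mon_one = a
}.

(** (Right) near-ring: (N,+) a group (not necessarily abelian),
    (N,.) a semigroup, and (a+b)y = ay+by. *)
Record nearRing := NearRing {
  nr_car :> Type;
  nr_add : nr_car -> nr_car -> nr_car;
  nr_zero : nr_car;
  nr_opp : nr_car -> nr_car;
  nr_mul : nr_car -> nr_car -> nr_car;
  nr_addA : forall a b c, nr_add a (nr_add b c) = nr_add (nr_add a b) c;
  nr_add0l : forall a, nr_add nr_zero a = a;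
  nr_add0r : forall a, nr_add a nr_zero = a;
  nr_addNl : forall a, nr_add (nr_opp a) a = nr_zero;
  nr_addNr : forall a, nr_add a (nr_opp a) = nr_zero;
  nr_mulA : forall a b c, nr_mul a (nr_mul b c) = nr_mul (nr_mul a b) c;
  nr_mulDl : forall a b y, nr_mul (nr_add a b) y = nr_add (nr_mul a y) (nr_mul b y)
}.

Arguments nr_add {_}. Arguments nr_zero {_}. Arguments nr_opp {_}. Arguments nr_mul {_}.
Arguments mon_mul {_}. Arguments mon_one {_}.

Section Defs.
Variable N : nearRing.
Variable G : monoid.

Definition normal_subgroup (A : N -> Prop) : Prop :=
  A nr_zero /\
  (forall x y, A x -> A y -> A (nr_add x y)) /\
  (forall x, A x -> A (nr_opp x)) /\
  (forall n x, A x -> A (nr_add (nr_add n x) (nr_opp n))).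

Definition list_sum (f : G -> N) (s : list G) : N :=
  fold_right (fun g acc => nr_add (f g) acc) nr_zero s.

Definition decomposition (F : G -> N -> Prop) (x : N) (s : list G) (f : G -> N)
  : Prop :=
  NoDup s /\ (forall g, F g (f g)) /\ (forall g, ~ In g s -> f g = nr_zero) /\
  x = list_sum f s.

Definition internal_direct_sum (A : N -> Prop) (F : G -> N -> Prop) : Prop :=
  (forall x, A x <-> exists s f, decomposition F x s f) /\
  (forall x s f t h, decomposition F x s f -> decomposition F x t h ->
     forall g, f g = h g).

Definition graded (Ng : G -> N -> Prop) : Prop :=
  (forall g, normal_subgroup (Ng g)) /\
  internal_direct_sum (fun _ => True) Ng /\
  (forall s t x y, Ng s x -> Ng t y -> Ng (mon_mul s t) (nr_mul x y)).

(** Ideal of a (right) near-ring (Pilz): normal subgroup, IN ⊆ I, and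
    n(n'+i) - nn' ∈ I. *)
Definition ideal (I : N -> Prop) : Prop :=
  normal_subgroup I /\
  (forall i n, I i -> I (nr_mul i n)) /\
  (forall n n' i, I i -> I (nr_add (nr_mul n (nr_add n' i)) (nr_opp (nr_mul n n')))).

Definition graded_ideal (Ng : G -> N -> Prop) (P : N -> Prop) : Prop :=
  ideal P /\ internal_direct_sum P (fun g x => P x /\ Ng g x).

Definition set_mul (I J : N -> Prop) : N -> Prop :=
  fun z => exists i j, I i /\ J j /\ z = nr_mul i j.

Definition set_eq (A B : N -> Prop) : Prop := forall z, A z <-> B z.
Definition subset (A B : N -> Prop) : Prop := forall z, A z -> B z.
Definition zero_set : N -> Prop := fun z => z = nr_zero.

Definition graded_weakly_prime (Ng : G -> N -> Prop) (P : N -> Prop) : Prop :=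
  graded_ideal Ng P /\
  (forall I J, graded_ideal Ng I -> graded_ideal Ng J ->
     ~ set_eq (set_mul I J) zero_set -> subset (set_mul I J) P ->
     subset I P \/ subset J P).

End Defs.

(** By weak primeness, graded ideals [I'], [J'] with [I'J' ⊆ P] and neither contained in
    [P] satisfy [I'J' = 0]. Here [IJ = 0 ⊆ P]. The sum [J + P] is again a graded ideal not
    contained in [P], and [I(J + P) ⊆ P] because [i(j + p) - ij] lies in the ideal [P];
    hence [I(J + P) = 0], in particular [IP = 0]. Symmetrically [(I + P)J ⊆ P] gives
    [PJ = 0], so [IP = {0} = PJ]. The real work is that a sum of graded ideals is graded:
    the additive group need not be abelian, but homogeneous elements of distinct degrees
    commute (their commutator lies in both components, which meet only in [0]), so
    homogeneous decompositions of [a] and [b] merge into one of [a + b]. *)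

From Stdlib Require Import List Classical ClassicalEpsilon.
From Pilot Require Import Defs.
Import ListNotations.

Declare Scope near_ring_scope.
Local Notation "0" := nr_zero : near_ring_scope.
Local Notation "a + b" := (nr_add a b) : near_ring_scope.
Local Notation "- a" := (nr_opp a) : near_ring_scope.
Local Notation "a - b" := (nr_add a (nr_opp b)) : near_ring_scope.
Local Notation "a * b" := (nr_mul a b) : near_ring_scope.

Section NearRingAdditiveGroup.
Context {N : nearRing}.
Implicit Types a b c : N.
Local Open Scope near_ring_scope.

Lemma addKl a b : - a + (a + b) = b.
Proof. rewrite nr_addA, nr_addNl, nr_add0l. reflexivity. Qed.

Lemma addNKl a b : a + (- a + b) = b.
Proof. rewrite nr_addA, nr_addNr, nr_add0l. reflexivity. Qed.

Lemma addNKr a b : a - b + b = a.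
Proof. rewrite <- nr_addA, nr_addNl, nr_add0r. reflexivity. Qed.

Lemma addIl a b c : a + b = a + c -> b = c.
Proof. intros E. rewrite <- (addKl a b), <- (addKl a c), E. reflexivity. Qed.

Lemma opp_unique a b : a + b = 0 -> b = - a.
Proof. intros E. rewrite <- (addKl a b), E, nr_add0r. reflexivity. Qed.

Lemma oppK a : - - a = a.
Proof. symmetry. apply opp_unique, nr_addNl. Qed.

Lemma oppD a b : - (a + b) = - b - a.
Proof.
  symmetry. apply opp_unique.
  rewrite nr_addA, <- (nr_addA _ a b), nr_addNr, nr_add0r, nr_addNr. reflexivity.
Qed.

Lemma mul0l a : 0 * a = 0.
Proof.
  symmetry. apply (addIl (0 * a)).
  rewrite nr_add0r, <- nr_mulDl, nr_add0l. reflexivity.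
Qed.

End NearRingAdditiveGroup.

Ltac group_simpl :=
  repeat (rewrite <- nr_addA || rewrite addKl || rewrite addNKl || rewrite oppD || rewrite oppK).

Definition set_add (N : nearRing) (A B : N -> Prop) : N -> Prop :=
  fun x => exists a b, A a /\ B b /\ x = nr_add a b.

Section SumOfIdeals.
Context {N : nearRing}.
Local Open Scope near_ring_scope.

Section NormalSubgroups.
Variables A B : N -> Prop.
Hypothesis nsA : normal_subgroup N A.
Hypothesis nsB : normal_subgroup N B.

Lemma set_add_l a : A a -> set_add N A B a.
Proof. intros Aa. exists a, 0. repeat split; auto; [apply nsB | now rewrite nr_add0r]. Qed.

Lemma set_add_r b : B b -> set_add N A B b.
Proof. intros Bb. exists 0, b. repeat split; auto; [apply nsA | now rewrite nr_add0l]. Qed.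

Lemma set_add_closed x y : set_add N A B x -> set_add N A B y -> set_add N A B (x + y).
Proof.
  destruct nsA as (_ & AD & _ & _), nsB as (_ & BD & _ & BC).
  intros (a1 & b1 & Aa1 & Bb1 & ->) (a2 & b2 & Aa2 & Bb2 & ->).
  (* b1 passes to the right of a2 as its conjugate -a2 + b1 + a2 *)
  exists (a1 + a2), (- a2 + b1 - - a2 + b2).
  repeat split; auto. group_simpl. reflexivity.
Qed.

Lemma normal_subgroup_set_add : normal_subgroup N (set_add N A B).
Proof.
  destruct nsA as (A0 & _ & AN & AC), nsB as (_ & _ & BN & BC).
  split; [|split; [|split]].
  - apply set_add_l, A0.
  - apply set_add_closed.
  - intros x (a & b & Aa & Bb & ->). exists (- a), (a - b - a).
    repeat split; auto. group_simpl. reflexivity.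
  - intros n x (a & b & Aa & Bb & ->). exists (n + a - n), (n + b - n).
    repeat split; auto. group_simpl. reflexivity.
Qed.

End NormalSubgroups.

Lemma ideal_set_add A B : ideal N A -> ideal N B -> ideal N (set_add N A B).
Proof.
  intros [nsA [AR AL]] [nsB [BR BL]].
  split; [apply normal_subgroup_set_add; auto | split].
  - intros x n (a & b & Aa & Bb & ->). exists (a * n), (b * n).
    repeat split; auto. apply nr_mulDl.
  - intros n n' x (a & b & Aa & Bb & ->).
    assert (E : n * (n' + (a + b)) - n * n'
                = (n * ((n' + a) + b) - n * (n' + a)) + (n * (n' + a) - n * n')).
    { rewrite (nr_addA _ n' a b). group_simpl. reflexivity. }
    rewrite E. apply set_add_closed; auto.
    + apply set_add_r; auto.
    + apply set_add_l; auto.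
Qed.

End SumOfIdeals.

Definition decomposable (N : nearRing) (G : monoid) (F : G -> N -> Prop) (x : N) : Prop :=
  exists s f, decomposition N G F x s f.

Section GradedNearRing.
Variable G : monoid.
Context {N : nearRing}.
Variable Ng : G -> N -> Prop.
Hypothesis HN : graded N G Ng.
Local Open Scope near_ring_scope.

Local Notation sum := (Defs.list_sum N G).

Lemma graded_normal_subgroup g : normal_subgroup N (Ng g).
Proof. apply HN. Qed.

Lemma decomposition_unique x s f t h :
  decomposition N G Ng x s f -> decomposition N G Ng x t h -> forall g, f g = h g.
Proof. apply HN. Qed.

Definition single (g : G) (c : N) : G -> N :=
  fun a => if excluded_middle_informative (a = g) then c else 0.

Lemma decomposition_single g c : Ng g c -> decomposition N G Ng c [g] (single g c).
Proof.
  intros Hc. unfold single. split; [|split; [|split]].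
  - constructor; [intros [] | constructor].
  - intros a. destruct excluded_middle_informative as [->|_]; [auto | apply graded_normal_subgroup].
  - intros a Ha. destruct excluded_middle_informative as [->|_]; [now destruct Ha; left | auto].
  - simpl. destruct excluded_middle_informative; [|congruence]. now rewrite nr_add0r.
Qed.

Lemma homogeneous_disjoint a b c : a <> b -> Ng a c -> Ng b c -> c = 0.
Proof.
  intros Hab Ha Hb.
  pose proof (decomposition_unique _ _ _ _ _
    (decomposition_single a c Ha) (decomposition_single b c Hb) a) as E.
  unfold single in E.
  destruct (excluded_middle_informative (a = a)); [|congruence].
  destruct (excluded_middle_informative (a = b)); [congruence | exact E].
Qed.

Lemma homogeneous_commute a b x y : a <> b -> Ng a x -> Ng b y -> x + y = y + x.
Proof.
  intros Hab Hx Hy.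
  destruct (graded_normal_subgroup a) as (_ & aD & aN & aC).
  destruct (graded_normal_subgroup b) as (_ & bD & bN & bC).
  assert (Hcomm : x + y - x - y = 0).
  { apply (homogeneous_disjoint a b); auto.
    replace (x + y - x - y) with (x + (y - x - y)) by (group_simpl; reflexivity).
    auto. }
  assert (Hconj : x + y - x = y).
  { rewrite <- (addNKr (x + y - x) y), Hcomm, nr_add0l. reflexivity. }
  rewrite <- (addNKr (x + y) x), Hconj. reflexivity.
Qed.

Lemma homogeneous_commute_sum g z f s :
  (forall a, Ng a (f a)) -> ~ In g s -> Ng g z -> z + sum f s = sum f s + z.
Proof.
  intros Hf Hs Hz. induction s as [|a s IH]; simpl.
  - now rewrite nr_add0r, nr_add0l.
  - rewrite nr_addA, (homogeneous_commute g a z (f a)); auto.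
    + rewrite <- !nr_addA, IH; auto. intros Hin; apply Hs; now right.
    + intros ->; apply Hs; now left.
Qed.

Lemma sum_eq_in f f' s : (forall g, In g s -> f g = f' g) -> sum f s = sum f' s.
Proof.
  induction s as [|a s IH]; intros E; simpl; [reflexivity|].
  rewrite (E a (or_introl eq_refl)), IH; [reflexivity|].
  intros g Hg. apply E. now right.
Qed.

Definition add_component (f : G -> N) (g : G) (z : N) : G -> N :=
  fun a => if excluded_middle_informative (a = g) then f g + z else f a.

Lemma sum_add_component f g z s :
  NoDup s -> In g s -> (forall a, Ng a (f a)) -> Ng g z ->
  sum f s + z = sum (add_component f g z) s.
Proof.
  intros Hnd Hin Hf Hz. induction Hnd as [|a s Has Hnd IH]; [destruct Hin|]. simpl.
  unfold add_component at 1. destruct excluded_middle_informative as [->|Hne].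
  - rewrite <- nr_addA, <- (homogeneous_commute_sum g z f s), nr_addA; auto. f_equal.
    apply sum_eq_in. intros b Hb. unfold add_component.
    destruct excluded_middle_informative as [->|]; [contradiction | reflexivity].
  - rewrite <- nr_addA, IH; auto. destruct Hin; [congruence | auto].
Qed.

Section HomogeneousFamily.
Variable F : G -> N -> Prop.
Hypothesis FD : forall g x y, F g x -> F g y -> F g (x + y).
Hypothesis F_homogeneous : forall g x, F g x -> Ng g x.

Lemma decomposable_add_homogeneous x g z :
  decomposable N G F x -> F g z -> decomposable N G F (x + z).
Proof.
  intros (s & f & Hnd & Hf & Hout & ->) Hz.
  assert (HNf : forall a, Ng a (f a)) by auto.
  assert (Hadd : forall a, F a (add_component f g z a)).
  { intros a. unfold add_component. destruct excluded_middle_informative as [->|]; auto. }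
  destruct (classic (In g s)) as [Hin|Hnin].
  - exists s, (add_component f g z). split; [|split; [|split]]; auto.
    + intros a Ha. unfold add_component.
      destruct excluded_middle_informative as [->|]; [contradiction | auto].
    + apply sum_add_component; auto.
  - exists (g :: s), (add_component f g z). split; [|split; [|split]]; auto.
    + now constructor.
    + intros a Ha. unfold add_component.
      destruct excluded_middle_informative as [->|]; [now destruct Ha; left|].
      apply Hout. intros Hin; apply Ha; now right.
    + simpl. unfold add_component at 1.
      destruct excluded_middle_informative; [|congruence].
      rewrite (Hout g Hnin), nr_add0l, <- (homogeneous_commute_sum g z f s); auto.
      f_equal. apply sum_eq_in. intros a Ha. unfold add_component.
      destruct excluded_middle_informative as [->|]; [contradiction | reflexivity].
Qed.

Lemma decomposable_add x y :
  decomposable N G F x -> decomposable N G F y -> decomposable N G F (x + y).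
Proof.
  intros Dx (t & h & _ & Hh & _ & ->). revert x Dx.
  induction t as [|b t IH]; intros x Dx; simpl.
  - now rewrite nr_add0r.
  - rewrite nr_addA. apply IH, (decomposable_add_homogeneous x b); auto.
Qed.

End HomogeneousFamily.

Lemma decomposition_closed (K : N -> Prop) (F : G -> N -> Prop) x s f :
  K 0 -> (forall x y, K x -> K y -> K (x + y)) -> (forall g y, F g y -> K y) ->
  decomposition N G F x s f -> K x.
Proof.
  intros K0 KD FK (_ & Hf & _ & ->).
  induction s as [|a s IH]; simpl; eauto.
Qed.

Lemma decomposition_mono (F F' : G -> N -> Prop) x s f :
  (forall g y, F g y -> F' g y) ->
  decomposition N G F x s f -> decomposition N G F' x s f.
Proof. intros H (Hnd & Hf & Hout & Hx). repeat split; auto. Qed.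

Lemma decomposable_mono (F F' : G -> N -> Prop) x :
  (forall g y, F g y -> F' g y) -> decomposable N G F x -> decomposable N G F' x.
Proof. intros H (s & f & D). exists s, f. exact (decomposition_mono F F' x s f H D). Qed.

Lemma graded_ideal_set_add A B :
  graded_ideal N G Ng A -> graded_ideal N G Ng B -> graded_ideal N G Ng (set_add N A B).
Proof.
  intros [IA [DA _]] [IB [DB _]].
  pose proof (ideal_set_add A B IA IB) as IAB.
  destruct IA as [nsA _], IB as [nsB _].
  pose proof IAB as [(AB0 & ABD & _ & _) _].
  split; [exact IAB | split].
  - intros x. split.
    + intros (a & b & Aa & Bb & ->).
      apply (decomposable_add (fun g y => set_add N A B y /\ Ng g y)).
      * intros g y z [ABy Ny] [ABz Nz]. split; [auto | now apply graded_normal_subgroup].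
      * now intros g y [_ Ny].
      * apply (decomposable_mono (fun g y => A y /\ Ng g y)); [|exact (proj1 (DA a) Aa)].
        intros g y [Ay Ny]. split; [now apply set_add_l | exact Ny].
      * apply (decomposable_mono (fun g y => B y /\ Ng g y)); [|exact (proj1 (DB b) Bb)].
        intros g y [By Ny]. split; [now apply set_add_r | exact Ny].
    + intros (s & f & D). refine (decomposition_closed _ _ x s f AB0 ABD _ D).
      now intros g y [ABy _].
  - intros x s f t h D D'.
    apply (decomposition_unique x s f t h);
      [apply (decomposition_mono _ _ _ _ _ (fun g y Hy => proj2 Hy) D)
      | apply (decomposition_mono _ _ _ _ _ (fun g y Hy => proj2 Hy) D')].
Qed.

End GradedNearRing.

Section WeaklyPrime.
Variable G : monoid.
Context {N : nearRing}.
Variable Ng : G -> N -> Prop.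
Variable P : N -> Prop.
Hypothesis HP : graded_weakly_prime N G Ng P.
Local Open Scope near_ring_scope.

Lemma graded_weakly_prime_mul_eq0 I J :
  graded_ideal N G Ng I -> graded_ideal N G Ng J ->
  subset N (set_mul N I J) P -> ~ subset N I P -> ~ subset N J P ->
  forall i j, I i -> J j -> i * j = 0.
Proof.
  intros HI HJ HIJP HIP HJP i j Ii Jj.
  destruct (classic (set_eq N (set_mul N I J) (zero_set N))) as [HIJ|HIJ].
  - apply HIJ. now exists i, j.
  - exfalso. destruct (proj2 HP I J HI HJ HIJ HIJP); auto.
Qed.

Hypothesis HN : graded N G Ng.

Section AnnihilatingPair.
Variables I J : N -> Prop.
Hypothesis HI : graded_ideal N G Ng I.
Hypothesis HJ : graded_ideal N G Ng J.
Hypothesis HIJP : subset N (set_mul N I J) P.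
Hypothesis HIP : ~ subset N I P.
Hypothesis HJP : ~ subset N J P.

Lemma weakly_prime_mul_eq0_l i p : I i -> P p -> i * p = 0.
Proof.
  destruct HP as [GP _]. pose proof GP as [[nsP [_ PL]] _].
  pose proof (proj1 (proj1 HJ)) as nsJ.
  intros Ii Pp. apply (graded_weakly_prime_mul_eq0 I (set_add N J P)); auto.
  - now apply graded_ideal_set_add.
  - intros z (i' & x & Ii' & (j & p' & Jj & Pp' & ->) & ->).
    rewrite <- (addNKr (i' * (j + p')) (i' * j)).
    apply nsP; [now apply PL | apply HIJP; now exists i', j].
  - intros HJP'. apply HJP. intros j Jj. apply HJP'. now apply set_add_l.
  - now apply set_add_r.
Qed.

Lemma weakly_prime_mul_eq0_r p j : P p -> J j -> p * j = 0.
Proof.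
  destruct HP as [GP _]. pose proof GP as [[nsP [PR _]] _].
  pose proof (proj1 (proj1 HI)) as nsI.
  intros Pp Jj. apply (graded_weakly_prime_mul_eq0 (set_add N I P) J); auto.
  - now apply graded_ideal_set_add.
  - intros z (x & j' & (i & p' & Ii & Pp' & ->) & Jj' & ->).
    rewrite nr_mulDl. apply nsP; [apply HIJP; now exists i, j' | now apply PR].
  - intros HIP'. apply HIP. intros i Ii. apply HIP'. now apply set_add_l.
  - now apply set_add_r.
Qed.

End AnnihilatingPair.
End WeaklyPrime.

Lemma set_mul_eq_zero_set (N : nearRing) (A B : N -> Prop) :
  A nr_zero -> B nr_zero -> (forall a b, A a -> B b -> nr_mul a b = nr_zero) ->
  set_eq N (set_mul N A B) (zero_set N).
Proof.
  intros A0 B0 AB z. split.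
  - intros (a & b & Aa & Bb & ->). now apply AB.
  - intros ->. exists nr_zero, nr_zero. repeat split; auto. now rewrite mul0l.
Qed.

Theorem theorem2 (G : monoid) (N : nearRing) (Ng : G -> N -> Prop)
  (HN : graded N G Ng) (P : N -> Prop) (HP : graded_weakly_prime N G Ng P)
  (I J : N -> Prop) (HI : graded_ideal N G Ng I) (HJ : graded_ideal N G Ng J)
  (HIJ : set_eq N (set_mul N I J) (zero_set N))
  (HIP : ~ subset N I P) (HJP : ~ subset N J P) :
  set_eq N (set_mul N I P) (set_mul N P J).
Proof.
  pose proof HP as [[[(P0 & _) _] _] _].
  pose proof HI as [[(I0 & _) _] _].
  pose proof HJ as [[(J0 & _) _] _].
  assert (HIJP : subset N (set_mul N I J) P).
  { intros z Hz. apply HIJ in Hz. now rewrite Hz. }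
  assert (HIP0 : set_eq N (set_mul N I P) (zero_set N)).
  { apply set_mul_eq_zero_set; auto.
    intros i p. now apply (weakly_prime_mul_eq0_l G Ng P HP HN I J). }
  assert (HPJ0 : set_eq N (set_mul N P J) (zero_set N)).
  { apply set_mul_eq_zero_set; auto.
    intros p j. now apply (weakly_prime_mul_eq0_r G Ng P HP HN I J). }
  intros z. now rewrite (HIP0 z), (HPJ0 z).
Qed.
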